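(* The map $\mathsf{Inc}$ from trees to increasing trees is a section of the forgetful map $\mathsf{Fgt}$ (i.e. $\mathsf{Fgt}(\mathsf{Inc}(T))=T$ for every tree $T$), and its linear extension is an injective morphism of unital algebras $(\overline{\mathcal{T}}_\bullet,\overline{\ast})\to(\mathcal{T}_\bullet,\overline{\ast})$, where $\overline{\ast}$ denotes left grafting on $\overline{\mathcal{T}}_\bullet$ and the restricted product on $\mathcal{T}_\bullet$.
   Context: A (planar rooted) tree is a finite planar rooted tree in which each vertex has one outgoing edge and at least two incoming edges (ordered left to right), incoming edges being leaves or coming from other vertices; $\varepsilon$ is the trivial tree with no vertex. For $m\ge1$, $\bigvee(T_0,\ldots,T_m)$ joins the roots of $T_0,\ldots,T_m$ to a new vertex with a new root; every non-trivial tree is uniquely such a wedge. A vertex with $j+1$ incoming edges carries $j$ branchings (pairs of consecutive incoming edges); the number of branchings is the degree. A level function on $T$ is a surjection $\lambda$ from the vertices onto $[k]=\{1,\ldots,k\}$ strictly increasing along each leaf-to-root path; an increasing tree is a pair $(T,\lambda)$; $\mathsf{Fgt}(T,\lambda)=T$. $\overline{\mathcal{T}}_\bullet$ (resp. $\mathcal{T}_\bullet$) is the free $\mathbb{Z}$-module on trees (resp. increasing trees), graded by number of branchings. Left grafting: $T_1\,\overline{\ast}\,T_2$ is obtained by grafting the root of $T_1$ onto the leftmost leaf of $T_2$ ($\varepsilon$ is the unit). For increasing trees, $(T_1,\lambda_1)\,\overline{\ast}\,(T_2,\lambda_2)$ is the left grafting of the underlying trees, with level $\lambda_1(v)$ on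 vertices of $T_1$ and $k_1+\lambda_2(v)$ on vertices of $T_2$, $k_1$ being the number of levels of $\lambda_1$. $\mathsf{Inc}$ is defined recursively: $\mathsf{Inc}(\varepsilon)=\varepsilon$; if $T=\bigvee(T_0,\ldots,T_m)$ and $\mathsf{Inc}(T_i)=(T_i,\lambda_i)$ with $k_i$ levels, then $\mathsf{Inc}(T)=(T,\lambda)$ where $\lambda(v)=k_0+\cdots+k_{i-1}+\lambda_i(v)$ for vertices $v$ of $T_i$ and the root vertex gets level $k_0+\cdots+k_m+1$. *)

From HB Require Import structures.
From mathcomp Require Import all_boot all_order all_algebra.
From mathcomp Require Import freeg.
Set Implicit Arguments. Unset Strict Implicit. Unset Printing Implicit Defensive.
Import GRing.Theory.

(* PLeaf = the trivial tree epsilon (a single edge, no vertex);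
   PNode [:: T_0; ...; T_m] = \bigvee(T_0,...,T_m). *)
Inductive ptree := PLeaf | PNode of seq ptree.

Fixpoint ptree_enc (t : ptree) : GenTree.tree unit :=
  match t with
  | PLeaf => GenTree.Leaf tt
  | PNode s => GenTree.Node 0 (map ptree_enc s)
  end.
Fixpoint ptree_dec (t : GenTree.tree unit) : ptree :=
  match t with
  | GenTree.Leaf _ => PLeaf
  | GenTree.Node _ s => PNode (map ptree_dec s)
  end.
Fixpoint ptree_encK (t : ptree) : ptree_dec (ptree_enc t) = t :=
  match t return ptree_dec (ptree_enc t) = t with
  | PLeaf => erefl
  | PNode s => congr1 PNode
      ((fix loop (s : seq ptree) : map ptree_dec (map ptree_enc s) = s :=
          match s with
          | [::] => erefl
          | x :: s' => f_equal2 cons (ptree_encK x) (loop s')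
          end) s)
  end.
HB.instance Definition _ := Countable.copy ptree (can_type ptree_encK).

Inductive ltree := LLeaf | LNode of nat & seq ltree.

Fixpoint ltree_enc (t : ltree) : GenTree.tree unit :=
  match t with
  | LLeaf => GenTree.Leaf tt
  | LNode n s => GenTree.Node n (map ltree_enc s)
  end.
Fixpoint ltree_dec (t : GenTree.tree unit) : ltree :=
  match t with
  | GenTree.Leaf _ => LLeaf
  | GenTree.Node n s => LNode n (map ltree_dec s)
  end.
Fixpoint ltree_encK (t : ltree) : ltree_dec (ltree_enc t) = t :=
  match t return ltree_dec (ltree_enc t) = t with
  | LLeaf => erefl
  | LNode n s => congr1 (LNode n)
      ((fix loop (s : seq ltree) : map ltree_dec (map ltree_enc s) = s :=
          match s with
          | [::] => erefl
          | x :: s' => f_equal2 cons (ltree_encK x) (loop s')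
          end) s)
  end.
HB.instance Definition _ := Countable.copy ltree (can_type ltree_encK).

Fixpoint is_tree (t : ptree) : bool :=
  match t with
  | PLeaf => true
  | PNode s => (1 < size s) && all is_tree s
  end.

Definition tree := {t : ptree | is_tree t}.
Definition eps : tree := exist is_tree PLeaf erefl.

Fixpoint branchings (t : ptree) : nat :=
  match t with
  | PLeaf => 0
  | PNode s => (size s).-1 + sumn (map branchings s)
  end.

(* left grafting: root of t1 grafted onto the leftmost leaf of t2 *)
Fixpoint pgraft (t1 t2 : ptree) : ptree :=
  match t2 with
  | PLeaf => t1
  | PNode [::] => PNode [::]
  | PNode (c :: s) => PNode (pgraft t1 c :: s)
  end.

Fixpoint forget (t : ltree) : ptree :=
  match t with
  | LLeaf => PLeaf
  | LNode _ s => PNode (map forget s)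
  end.

Fixpoint labels (t : ltree) : seq nat :=
  match t with
  | LLeaf => [::]
  | LNode n s => n :: flatten (map labels s)
  end.

Definition nlev (t : ltree) : nat := foldr maxn 0 (labels t).

Fixpoint strictly_increasing (t : ltree) : bool :=
  match t with
  | LLeaf => true
  | LNode n s =>
      all (fun c => if c is LNode m _ then m < n else true) s
      && all strictly_increasing s
  end.

Definition level_surj (t : ltree) : bool :=
  all (fun i => i \in iota 1 (nlev t)) (labels t)
  && all (fun i => i \in labels t) (iota 1 (nlev t)).

Definition is_itree (t : ltree) : bool :=
  is_tree (forget t) && strictly_increasing t && level_surj t.

Definition itree := {t : ltree | is_itree t}.
Definition ieps : itree := exist is_itree LLeaf erefl.

Definition Fgt (t : itree) : tree :=
  exist is_tree (forget (val t))
    (proj1 (andb_prop _ _ (proj1 (andb_prop _ _ (valP t))))).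

Fixpoint lshift (k : nat) (t : ltree) : ltree :=
  match t with
  | LLeaf => LLeaf
  | LNode n s => LNode (k + n) (map (lshift k) s)
  end.

Fixpoint lgraft_raw (t1 t2 : ltree) : ltree :=
  match t2 with
  | LLeaf => t1
  | LNode n [::] => LNode n [::]
  | LNode n (c :: s) => LNode n (lgraft_raw t1 c :: s)
  end.

Definition lgraft (t1 t2 : ltree) : ltree := lgraft_raw t1 (lshift (nlev t1) t2).

Fixpoint shift_acc (acc : nat) (cs : seq ltree) : seq ltree :=
  match cs with
  | [::] => [::]
  | c :: cs' => lshift acc c :: shift_acc (acc + nlev c) cs'
  end.

Fixpoint pinc (t : ptree) : ltree :=
  match t with
  | PLeaf => LLeaf
  | PNode s =>
      let cs := map pinc s in
      LNode (sumn (map nlev cs)).+1 (shift_acc 0 cs)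
  end.

(* Operations on the subtypes.  The results are always valid (closure
   facts), [insubd] with a default is only used to avoid carrying the
   closure proofs inside the definitions. *)
Definition tgraft (t1 t2 : tree) : tree := insubd eps (pgraft (val t1) (val t2)).
Definition igraft (t1 t2 : itree) : itree := insubd ieps (lgraft (val t1) (val t2)).
Definition Inc (t : tree) : itree := insubd ieps (pinc (val t)).

Notation Tbar := {freeg tree / int}.
Notation Tinc := {freeg itree / int}.

Definition Tbar_mul (x y : Tbar) : Tbar :=
  fglift (fun t1 => fglift (fun t2 => << tgraft t1 t2 >> : Tbar) y) x.
Definition Tinc_mul (x y : Tinc) : Tinc :=
  fglift (fun t1 => fglift (fun t2 => << igraft t1 t2 >> : Tinc) y) x.

Definition Tbar_one : Tbar := << eps >>.
Definition Tinc_one : Tinc := << ieps >>.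

Definition IncL (x : Tbar) : Tinc := fglift (fun t => << Inc t >> : Tinc) x.

From Pilot Require Import Defs.
From HB Require Import structures.
From mathcomp Require Import all_boot all_order all_algebra.
From mathcomp Require Import freeg.
Import GRing.Theory.

Set Implicit Arguments.
Unset Strict Implicit.
Unset Printing Implicit Defensive.

(* [Inc] numbers the vertices of a tree in postorder (the subtrees from left
   to right, then the root), so its number of levels is the number of
   vertices and forgetting the levels gives the tree back; in particular
   [Inc] is injective.  In a left grafting [T1 * T2] the vertices of [T1]
   come first in postorder, followed by those of [T2], so [Inc (T1 * T2)] is
   [Inc T1] grafted on [Inc T2] shifted by the number of vertices of [T1],
   i.e. the product of increasing trees.  The algebraic statements are then
   formal: the linear extension of an injective morphism of magmas is an
   injective algebra morphism. *)

Lemma ptree_ind_mem (P : ptree -> Prop) :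
  P PLeaf -> (forall s, {in s, forall t, P t} -> P (PNode s)) -> forall t, P t.
Proof.
(* no [done] in these proofs: it would close goals with the still unguarded [IH] *)
move=> PL PN; fix IH 1; case=> [|s]; first exact: PL.
apply: PN; move: s; fix IHs 1; case=> [|c s] t; first by clear IH IHs; rewrite in_nil.
rewrite in_cons => /predU1P[-> | /IHs Pt]; [exact: IH | exact: Pt].
Qed.

Lemma ltree_ind_mem (P : ltree -> Prop) :
  P LLeaf -> (forall n s, {in s, forall t, P t} -> P (LNode n s)) -> forall t, P t.
Proof.
move=> PL PN; fix IH 1; case=> [|n s]; first exact: PL.
apply: PN; move: s; fix IHs 1; case=> [|c s] t; first by clear IH IHs; rewrite in_nil.
rewrite in_cons => /predU1P[-> | /IHs Pt]; [exact: IH | exact: Pt].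
Qed.

Fixpoint nvert (t : ptree) : nat :=
  if t is PNode s then (sumn (map nvert s)).+1 else 0.

Lemma ltree_lshift0 (t : ltree) : Defs.lshift 0 t = t.
Proof.
elim/ltree_ind_mem: t => //= n s IH; rewrite add0n.
by congr LNode; rewrite -[RHS]map_id; apply/eq_in_map.
Qed.

Lemma ltree_lshiftD a b (t : ltree) :
  Defs.lshift a (Defs.lshift b t) = Defs.lshift (a + b) t.
Proof.
elim/ltree_ind_mem: t => //= n s IH; rewrite addnA -map_comp.
by congr LNode; apply/eq_in_map.
Qed.

Lemma labels_lshift k t : labels (Defs.lshift k t) = map (addn k) (labels t).
Proof.
elim/ltree_ind_mem: t => //= n s IH; rewrite map_flatten -!map_comp.
by congr (_ :: flatten _); apply/eq_in_map => c /IH.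
Qed.

Lemma forget_lshift k t : forget (Defs.lshift k t) = forget t.
Proof.
elim/ltree_ind_mem: t => //= n s IH; rewrite -map_comp.
by congr PNode; apply/eq_in_map.
Qed.

Lemma strictly_increasing_lshift k t :
  strictly_increasing (Defs.lshift k t) = strictly_increasing t.
Proof.
elim/ltree_ind_mem: t => //= n s IH; rewrite !all_map.
congr andb; first by apply: eq_all => -[|m l] //=; rewrite ltn_add2l.
by apply/eq_in_all => c /IH.
Qed.

Lemma forget_shift_acc a cs : map forget (shift_acc a cs) = map forget cs.
Proof. by elim: cs a => //= c cs IH a; rewrite forget_lshift IH. Qed.

Lemma map_lshift_shift_acc k a cs :
  map (Defs.lshift k) (shift_acc a cs) = shift_acc (k + a) cs.
Proof. by elim: cs a => //= c cs IH a; rewrite ltree_lshiftD IH addnA. Qed.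

Lemma forget_pinc t : forget (pinc t) = t.
Proof.
elim/ptree_ind_mem: t => //= s IH; rewrite forget_shift_acc -map_comp.
by congr PNode; rewrite -[RHS]map_id; apply/eq_in_map.
Qed.

Lemma max_iota1 n : \max_(i <- iota 1 n) i = n.
Proof.
elim: n => [|n IH]; first by rewrite big_nil.
by rewrite -[n.+1]addn1 iotaD big_cat big_seq1 IH add1n addn1; apply/maxn_idPr.
Qed.

Lemma nlev_perm_iota t n : perm_eq (labels t) (iota 1 n) -> nlev t = n.
Proof. by move=> perm_t; rewrite /nlev foldrE (perm_big _ perm_t) max_iota1. Qed.

Lemma labels_shift_acc a cs :
  {in cs, forall c, perm_eq (labels c) (iota 1 (nlev c))} ->
  perm_eq (flatten (map labels (shift_acc a cs))) (iota a.+1 (sumn (map nlev cs))).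
Proof.
elim: cs a => //= c cs IH a perm_cs; rewrite iotaD.
apply: perm_cat; last by rewrite addSn IH // => d d_cs; apply: perm_cs; rewrite inE d_cs orbT.
rewrite labels_lshift -[a.+1]addn1 iotaDl perm_map //.
by apply: perm_cs; rewrite inE eqxx.
Qed.

Lemma labels_pinc t : perm_eq (labels (pinc t)) (iota 1 (nvert t)).
Proof.
elim/ptree_ind_mem: t => // s IH; rewrite [labels _]/= [nvert _]/=.
have nlev_s : sumn (map nlev (map pinc s)) = sumn (map nvert s).
  by rewrite -map_comp; congr sumn; apply/eq_in_map => c /IH /nlev_perm_iota.
have perm_children : perm_eq (flatten (map labels (shift_acc 0 (map pinc s))))
                             (iota 1 (sumn (map nvert s))).
  rewrite -nlev_s; apply: labels_shift_acc => _ /mapP[c c_s ->].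
  by rewrite (nlev_perm_iota (IH c c_s)); apply: IH.
rewrite nlev_s -[(sumn _).+1]addn1 iotaD -cat1s perm_catC.
by apply: perm_cat perm_children _; rewrite addnC.
Qed.

Lemma nlev_pinc t : nlev (pinc t) = nvert t.
Proof. exact/nlev_perm_iota/labels_pinc. Qed.

Lemma sumn_nlev_pinc s : sumn (map nlev (map pinc s)) = sumn (map nvert s).
Proof. by rewrite -map_comp; congr sumn; apply: eq_map => t /=; rewrite nlev_pinc. Qed.

Lemma root_le_nlev m l : m <= nlev (LNode m l).
Proof. by rewrite /nlev /= leq_maxl. Qed.

Lemma shift_acc_roots_le a cs :
  all (fun c => if c is LNode m _ then m <= a + sumn (map nlev cs) else true)
    (shift_acc a cs).
Proof.
elim: cs a => //= c cs IH a; rewrite addnA IH andbT.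
case: c => //= m l; rewrite -addnA leq_add2l.
exact: leq_trans (root_le_nlev m l) (leq_addr _ _).
Qed.

Lemma strictly_increasing_shift_acc a cs :
  all strictly_increasing cs -> all strictly_increasing (shift_acc a cs).
Proof.
elim: cs a => //= c cs IH a /andP[c_incr cs_incr].
by rewrite strictly_increasing_lshift c_incr IH.
Qed.

Lemma strictly_increasing_pinc t : strictly_increasing (pinc t).
Proof.
elim/ptree_ind_mem: t => //= s IH; apply/andP; split; first exact: shift_acc_roots_le 0 _.
by apply/strictly_increasing_shift_acc/allP => _ /mapP[c c_s ->]; apply: IH.
Qed.

Lemma is_itree_pinc t : is_itree (pinc t) = is_tree t.
Proof.
have perm_t := labels_pinc t; rewrite /is_itree /level_surj nlev_pinc.
rewrite forget_pinc strictly_increasing_pinc andbT.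
by apply/andb_idr => _; apply/andP; split; apply/allP => i; rewrite (perm_mem perm_t).
Qed.

Lemma val_Inc T : val (Inc T) = pinc (val T).
Proof.
have pinc_itree : is_itree (pinc (val T)) by rewrite is_itree_pinc; case: T.
exact: insubdK pinc_itree.
Qed.

Lemma Fgt_Inc : cancel Inc Fgt.
Proof. by move=> T; apply: val_inj; rewrite /= val_Inc forget_pinc. Qed.

Lemma Inc_eps : Inc eps = ieps.
Proof. exact/val_inj/val_Inc. Qed.

Lemma is_tree_pgraft t1 t2 : is_tree t1 -> is_tree t2 -> is_tree (pgraft t1 t2).
Proof.
move=> t1_tree; elim/ptree_ind_mem: t2 => // -[|c s] // IH /and3P[size_s c_tree s_tree].
by apply/and3P; split => //; apply: IH; rewrite ?inE ?eqxx.
Qed.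

Lemma nvert_pgraft t1 t2 : is_tree t2 -> nvert (pgraft t1 t2) = nvert t1 + nvert t2.
Proof.
elim/ptree_ind_mem: t2 => [_ | [|c s] IH] //=; first by rewrite addn0.
case/and3P=> _ c_tree _.
by rewrite IH ?inE ?eqxx // -!addnA addnS.
Qed.

Lemma pinc_pgraft t1 t2 :
  is_tree t2 -> pinc (pgraft t1 t2) = lgraft (pinc t1) (pinc t2).
Proof.
rewrite /lgraft; elim/ptree_ind_mem: t2 => [|[|c s] IH] //; case/and3P=> _ c_tree _ /=.
rewrite !nlev_pinc !sumn_nlev_pinc (nvert_pgraft _ c_tree) IH ?inE ?eqxx //.
by rewrite !ltree_lshift0 !add0n !nlev_pinc map_lshift_shift_acc addnS addnA.
Qed.

Lemma Inc_tgraft T1 T2 : Inc (tgraft T1 T2) = igraft (Inc T1) (Inc T2).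
Proof.
have graft_tree : is_tree (pgraft (val T1) (val T2)) by apply: is_tree_pgraft; apply: valP.
have graft_itree : is_itree (lgraft (pinc (val T1)) (pinc (val T2))).
  by rewrite -pinc_pgraft ?is_itree_pinc //; apply: valP.
apply: val_inj; rewrite /igraft !val_Inc (insubdK _ graft_itree).
rewrite /tgraft (insubdK _ graft_tree).
by apply: pinc_pgraft; apply: valP.
Qed.

Local Open Scope ring_scope.

Section FreeModules.
Variable R : nzRingType.

HB.instance Definition _ (K : choiceType) (M : lmodType R) (f : K -> M) :=
  GRing.isZmodMorphism.Build {freeg K / R} M (fglift f) (lift_is_additive f).

Definition fgmap (K L : choiceType) (k : K -> L) : {freeg K / R} -> {freeg L / R} :=
  fglift (fun a => << k a >>).

Definition fgmul (K : choiceType) (op : K -> K -> K) (x y : {freeg K / R}) :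
  {freeg K / R} := fglift (fun a => fglift (fun b => << op a b >>) y) x.

Lemma fglift_sumE (K : choiceType) (M : lmodType R) (f : K -> M) x :
  fglift f x = \sum_(a <- dom x) coeff a x *: f a.
Proof. by rewrite -{1}[x]freeg_sumE raddf_sum; apply: eq_bigr => a _; apply: liftU. Qed.

Lemma eq_fglift (K : choiceType) (M : lmodType R) (f g : K -> M) :
  f =1 g -> fglift f =1 fglift g.
Proof. by move=> eq_fg x; rewrite !fglift_sumE; apply: eq_bigr => a _; rewrite eq_fg. Qed.

Lemma fgmapU (K L : choiceType) (k : K -> L) a : fgmap k << a >> = << k a >>.
Proof. by rewrite /fgmap liftU scale1r. Qed.

Lemma coeff_fgmap (K L : choiceType) (k : K -> L) x a :
  injective k -> coeff (k a) (fgmap k x) = coeff a x.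
Proof.
move=> k_inj; rewrite /fgmap fglift_sumE -[in RHS](freeg_sumE x) !raddf_sum.
by apply: eq_bigr => b _ /=; rewrite coeffZ !coeffU mul1r (inj_eq k_inj).
Qed.

Lemma fgmap_inj (K L : choiceType) (k : K -> L) : injective k -> injective (fgmap k).
Proof.
move=> k_inj x y eq_xy; apply/eqP/freeg_eqP => a.
by rewrite -!(coeff_fgmap _ _ k_inj) eq_xy.
Qed.

End FreeModules.

Lemma raddfZ_int (M N : lmodType int) (phi : {additive M -> N}) a v :
  phi (a *: v) = a *: phi v.
Proof. by rewrite -[a]intz !scaler_int raddfMz. Qed.

Lemma raddf_fglift (K : choiceType) (M N : lmodType int) (f : K -> M)
    (phi : {additive M -> N}) x :
  phi (fglift f x) = fglift (phi \o f) x.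
Proof. by rewrite !fglift_sumE raddf_sum; apply: eq_bigr => a _; rewrite raddfZ_int. Qed.

Lemma fglift_fgmap (K L : choiceType) (M : lmodType int) (h : L -> M) (k : K -> L) x :
  fglift h (fgmap k x) = fglift (h \o k) x.
Proof. by rewrite raddf_fglift; apply: eq_fglift => a /=; rewrite liftU scale1r. Qed.

Lemma fgmap_mul (K L : choiceType) (k : K -> L) (opK : K -> K -> K) (opL : L -> L -> L) :
  {morph k : a b / opK a b >-> opL a b} ->
  {morph fgmap k : x y / fgmul opK x y >-> fgmul opL x y : {freeg L / int}}.
Proof.
move=> k_morph x y; rewrite /fgmul /fgmap fglift_fgmap raddf_fglift.
apply: eq_fglift => a /=; rewrite fglift_fgmap raddf_fglift.
by apply: eq_fglift => b /=; rewrite liftU scale1r k_morph.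
Qed.

Theorem lemma4p5 :
  (forall T : tree, Fgt (Inc T) = T) /\
  (forall (a : int) (x y : Tbar), IncL (a *: x + y) = a *: IncL x + IncL y) /\
  IncL Tbar_one = Tinc_one /\
  (forall x y : Tbar, IncL (Tbar_mul x y) = Tinc_mul (IncL x) (IncL y)) /\
  injective IncL.
Proof.
have IncL_fgmap : IncL =1 fgmap Inc by [].
split; first exact: Fgt_Inc.
split; first by move=> a x y; rewrite /IncL raddfD raddfZ_int.
split; first by rewrite IncL_fgmap fgmapU Inc_eps.
split; first exact: (fgmap_mul Inc_tgraft).
exact/fgmap_inj/can_inj/Fgt_Inc.
Qed.
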